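(* Let $n\ge1$, let $d\ge1$ be a square-free integer and let $L(\mathbf{X})=\sum_{i,j=1}^n a_{ij}x_{ij}\in\mathbb{Z}[\mathbf{X}]$ be a linear form in the $n^2$ variables $\mathbf{X}=(x_{ij})_{i,j=1}^n$. Let $D=\gcd(L,d)$ be the greatest common divisor of $d$ and all coefficients $a_{ij}$. Define \[ S_d(L)=\sum_{\substack{\mathbf{X}\in\mathbb{Z}_{d}^{n\times n}\\ \det\mathbf{X}\equiv0 \bmod d}}\exp\left(2\pi i\,L(\mathbf{X})/d\right). \] Then \[ |S_d(L)|\le d^{n^2+o(1)}\begin{cases}(D/d)^n & \text{if $L$ is a monomial},\\ (D/d)^{(n+1)/2} & \text{otherwise},\end{cases} \] where $o(1)$ denotes a quantity tending to $0$ as $d\to\infty$, uniformly in $L$ (depending only on $n$).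
   Context: $\mathbb{Z}_{d}$ denotes the residue ring modulo $d$, represented by $\{0,\dots,d-1\}$. ''$L$ is a monomial'' means exactly one coefficient $a_{ij}$ is nonzero. *)

From HB Require Import structures.
From mathcomp Require Import all_boot all_order all_algebra.
From mathcomp Require Import all_classical all_reals all_analysis.
Set Implicit Arguments. Unset Strict Implicit. Unset Printing Implicit Defensive.
Import Order.TTheory GRing.Theory Num.Theory.
Local Open Scope ring_scope.

Definition squarefree (d : nat) : Prop :=
  forall p : nat, prime p -> ~~ (p ^ 2 %| d)%N.

Definition lift_mx (d n : nat) (X : 'M['I_d]_n) : 'M[int]_n :=
  map_mx (fun x : 'I_d => (nat_of_ord x)%:Z) X.

Definition linform (n : nat) (a : 'M[int]_n) (Y : 'M[int]_n) : int :=
  \sum_(i < n) \sum_(j < n) a i j * Y i j.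

Definition detzero (d n : nat) (X : 'M['I_d]_n) : bool :=
  (d%:Z %| \det (lift_mx X))%Z.

Definition Sd_re (R : realType) (d n : nat) (a : 'M[int]_n) : R :=
  \sum_(X : 'M['I_d]_n | detzero X)
     cos (2 * pi * (linform a (lift_mx X))%:~R / d%:R).
Definition Sd_im (R : realType) (d n : nat) (a : 'M[int]_n) : R :=
  \sum_(X : 'M['I_d]_n | detzero X)
     sin (2 * pi * (linform a (lift_mx X))%:~R / d%:R).

Definition Sd_abs (R : realType) (d n : nat) (a : 'M[int]_n) : R :=
  Num.sqrt (Sd_re R d a ^+ 2 + Sd_im R d a ^+ 2).

Definition gcdLd (d n : nat) (a : 'M[int]_n) : nat :=
  \big[gcdn/d]_(i < n) \big[gcdn/d]_(j < n) `|a i j|%N.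

Definition is_monomial (n : nat) (a : 'M[int]_n) : bool :=
  #|[set ij : 'I_n * 'I_n | a ij.1 ij.2 != 0]| == 1%N.

From HB Require Import structures.
From mathcomp Require Import all_boot all_order all_algebra.
From mathcomp Require Import all_classical all_reals all_analysis.
From mathcomp Require Import complex ring lra.
Set Implicit Arguments. Unset Strict Implicit. Unset Printing Implicit Defensive.
Import Order.TTheory GRing.Theory Num.Theory.
Import numFieldNormedType.Exports.
Local Open Scope ring_scope.

(* We prove the stronger bound |S_d(L)| <= d^(n^2 - n) D^n for every L, so that
   eps = 0 works (D/d <= 1 and (n+1)/2 <= n).
   Write Z = Z/dZ, e for the character x |-> exp(2 pi i x/d), and S(A) for the sum
   of e(<A, X>) over the singular X.  Translating column j of X by v adds
   <v, c_X> to det X, c_X the j-th column of cofactors; averaging over v and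
   detecting det X = 0 by a character sum over t gives
     S(A) = d^-1 sum_X sum_t [a + t c_X = 0] e(<A, X>) e(t det X),
   with a the j-th column of A.  A solution t makes the other columns of X
   orthogonal to a (because adj X * X = det X), and the solutions form a coset
   of the annihilator of a; counting yields |S(A)| <= d^(n^2-n) |ann a|^n.
   Finally S(A) = S(A F^T) when det F = 1, and since Z/dZ is von Neumann regular
   for squarefree d, F can be chosen so that ann (A F^T e_1) = ann A, whose size
   is at most D. *)

Section RegularRing.
Variable R : comNzRingType.
Hypothesis regular : forall x : R, exists y, x * x * y = x.

Lemma regular_mx_local_unit m n (M : 'M[R]_(m, n)) :
  exists f : R, f *: M = M /\ forall u, u *: M = 0 -> u * f = 0.
Proof.
have [y hy] := fin_all_exists (fun ij : 'I_m * 'I_n => regular (M ij.1 ij.2)).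
have kill_entry ij : (1 - M ij.1 ij.2 * y ij) * M ij.1 ij.2 = 0.
  by rewrite mulrBl mul1r mulrAC hy subrr.
exists (1 - \prod_ij (1 - M ij.1 ij.2 * y ij)); split.
  apply/matrixP => i j; rewrite !mxE mulrBl mul1r (bigD1 (i, j)) //=.
  by rewrite mulrAC (kill_entry (i, j)) mul0r subr0.
move=> u /matrixP uM.
have uM0 ij : u * M ij.1 ij.2 = 0 by have := uM ij.1 ij.2; rewrite !mxE.
apply/eqP; rewrite mulrBr mulr1 subr_eq0; apply/eqP.
elim/big_rec: _ => [|ij x _ IH]; first by rewrite mulr1.
by rewrite mulrA mulrBr mulr1 mulrA uM0 mul0r subr0 -IH.
Qed.

Lemma regular_ann_merge m n (B1 B2 : 'M[R]_(m, n)) :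
  exists s, forall t, t *: (B1 + s *: B2) = 0 -> t *: B1 = 0 /\ t *: B2 = 0.
Proof.
have [f [fB1 annB1]] := regular_mx_local_unit B1.
have ff : f * (1 - f) = 0.
  by rewrite mulrC; apply: annB1; rewrite scalerBl scale1r fB1 subrr.
exists (1 - f) => t ht.
have tB1 : t *: B1 = 0.
  have tB1N : t *: B1 = - (t *: ((1 - f) *: B2)).
    by apply/eqP; rewrite -addr_eq0 -scalerDr ht.
  rewrite -fB1 scalerA mulrC -scalerA tB1N scalerN !scalerA mulrAC ff.
  by rewrite mul0r scale0r oppr0.
split=> //; move: ht; rewrite scalerDr tB1 add0r scalerA mulrBr mulr1.
by rewrite annB1 // subr0.
Qed.

Lemma regular_ann_col_comb m n (A : 'M[R]_(m, n.+1)) :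
  exists w : 'cV[R]_n.+1,
    w 0 0 = 1 /\ forall t, t *: (A *m w) = 0 -> t *: A = 0.
Proof.
have colsP k : exists w : 'cV[R]_n.+1, w 0 0 = 1 /\
    forall t, t *: (A *m w) = 0 -> forall j : 'I_n.+1, (j <= k)%N -> t *: col j A = 0.
  elim: k => [|k [w [w0 hw]]].
    exists (delta_mx 0 0); split=> [|t tA j]; first by rewrite mxE.
    by rewrite leqn0 => /eqP j0; rewrite (_ : j = 0) ?colE //; apply: val_inj.
  have [kn|nk] := ltnP k.+1 n.+1; last first.
    by exists w; split=> // t /hw tA j _; exact: tA j (leq_trans (ltn_ord j) nk).
  pose j1 : 'I_n.+1 := Ordinal kn.
  have [s hs] := regular_ann_merge (A *m w) (col j1 A).
  exists (w + s *: delta_mx j1 0); split=> [|t].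
    by rewrite !mxE w0 mulr0 addr0.
  rewrite mulmxDr -scalemxAr -colE => /hs [/hw tAw tj1] j.
  rewrite leq_eqVlt ltnS => /predU1P [jk | /tAw //].
  by rewrite (_ : j = j1) //; apply: val_inj.
have [w [w0 hw]] := colsP n.
exists w; split=> // t /hw tA; apply/matrixP => i j.
by have /matrixP/(_ i 0) := tA j (ltn_ord j); rewrite !mxE.
Qed.
End RegularRing.

Section FiniteReducedRing.
Variable R : finComNzRingType.
Hypothesis reduced : forall (x : R) k, x ^+ k.+1 = 0 -> x = 0.

Lemma exists_idempotent_exp (x : R) :
  exists2 N, (0 < N)%N & x ^+ N * x ^+ N = x ^+ N.
Proof.
have [i [k k_gt0 xik]] : exists i, exists2 k, (0 < k)%N & x ^+ (i + k) = x ^+ i.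
  have /injectivePn [i [j ij xij]] : ~~ injectiveb (fun k : 'I_#|R|.+1 => x ^+ k).
    by apply/injectiveP => /leq_card; rewrite card_ord ltnn.
  case: (ltngtP i j) => [lt_ij|lt_ji|/val_inj eq_ij]; last by rewrite eq_ij eqxx in ij.
    by exists i, (j - i)%N; rewrite ?subn_gt0 // subnKC ?(ltnW lt_ij).
  by exists j, (i - j)%N; rewrite ?subn_gt0 // subnKC ?(ltnW lt_ji).
have period a : (i <= a)%N -> x ^+ (a + k) = x ^+ a.
  by move=> ia; rewrite -(subnK ia) -addnA exprD xik -exprD.
have periodic a q : (i <= a)%N -> x ^+ (a + q * k) = x ^+ a.
  move=> ia; elim: q => [|q IH]; first by rewrite addn0.
  by rewrite mulSn addnCA addnC period ?IH // (leq_trans ia) ?leq_addr.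
exists (i.+1 * k)%N; first by rewrite muln_gt0.
by rewrite -exprD periodic // (leq_trans (leqnSn i)) // leq_pmulr.
Qed.

Lemma reduced_regular (x : R) : exists y, x * x * y = x.
Proof.
have [N N_gt0 idem] := exists_idempotent_exp x; set e := x ^+ N in idem.
have /reduced/eqP : (x - x * e) ^+ N.-1.+1 = 0.
  rewrite prednK // -{1}[x]mulr1 -mulrBr exprMn -/e -(prednK N_gt0) exprS mulrA.
  by rewrite mulrBr mulr1 idem subrr mul0r.
rewrite subr_eq0 => /eqP xe.
by exists (x ^+ N.-1); rewrite -mulrA -exprS prednK // {3}xe.
Qed.
End FiniteReducedRing.

Lemma squarefree_dvdn d z : (0 < d)%N -> squarefree d ->
  (forall p, prime p -> p %| d -> p %| z)%N -> (d %| z)%N.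
Proof.
move=> d_gt0 sqf_d pz; apply/dvdn_partP => // p; rewrite mem_primes.
case/and3P=> p_pr _ pd; rewrite p_part.
have : (logn p d < 2)%N by rewrite ltnNge -pfactor_dvdn ?sqf_d.
have : (0 < logn p d)%N by rewrite logn_gt0 mem_primes p_pr d_gt0.
by case: logn => [|[|]] // _ _; rewrite expn1 pz.
Qed.

Lemma Zp_reduced m : squarefree m.+2 ->
  forall (x : 'Z_m.+2) k, x ^+ k.+1 = 0 -> x = 0.
Proof.
move=> sqf x k xk0.
have dvd_xk : (m.+2 %| x ^ k.+1)%N.
  by rewrite /dvdn -val_Zp_nat // natrX natr_Zp xk0.
have : (m.+2 %| x)%N.
  apply: squarefree_dvdn => // p p_pr /dvdn_trans/(_ dvd_xk).
  by rewrite Euclid_dvdX // => /andP [].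
by rewrite /dvdn modn_small // => /eqP x0; apply: val_inj.
Qed.

Section MatrixDot.
Variable Z : comNzRingType.

Definition vdot n (a v : 'cV[Z]_n) : Z := \sum_i a i 0 * v i 0.
Definition mxdot m n (A X : 'M[Z]_(m, n)) : Z := \sum_i \sum_j A i j * X i j.
Definition cofactor_col n (j : 'I_n) (X : 'M[Z]_n) : 'cV[Z]_n :=
  \col_i cofactor X i j.

Lemma vdotC n (a v : 'cV[Z]_n) : vdot a v = vdot v a.
Proof. by apply: eq_bigr => i _; rewrite mulrC. Qed.

Lemma vdotDl n (a b v : 'cV[Z]_n) : vdot (a + b) v = vdot a v + vdot b v.
Proof. by rewrite -big_split; apply: eq_bigr => i _; rewrite mxE mulrDl. Qed.

Lemma vdotZl n t (a v : 'cV[Z]_n) : vdot (t *: a) v = t * vdot a v.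
Proof. by rewrite mulr_sumr; apply: eq_bigr => i _; rewrite mxE mulrA. Qed.

Lemma vdotDr n (a v w : 'cV[Z]_n) : vdot a (v + w) = vdot a v + vdot a w.
Proof. by rewrite vdotC vdotDl !(vdotC a). Qed.

Lemma vdot_delta n (a : 'cV[Z]_n) i : vdot a (delta_mx i 0) = a i 0.
Proof.
rewrite /vdot (bigD1 i) //= mxE !eqxx mulr1 big1 ?addr0 // => k /negbTE ki.
by rewrite mxE ki mulr0.
Qed.

Lemma vdot0l n (v : 'cV[Z]_n) : vdot 0 v = 0.
Proof. by rewrite /vdot big1 // => i _; rewrite mxE mul0r. Qed.

Lemma det_add_col n (j : 'I_n) (X : 'M[Z]_n) v :
  \det (X + v *m delta_mx 0 j) = \det X + vdot v (cofactor_col j X).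
Proof.
rewrite (expand_det_col _ j) (expand_det_col X j) -big_split.
apply: eq_bigr => i _.
have -> : cofactor (X + v *m delta_mx 0 j) i j = cofactor X i j.
  rewrite /cofactor; congr (_ * \det _); apply/matrixP => k l.
  rewrite !mxE big_ord1 !mxE [lift j l == j]eq_sym (negbTE (neq_lift j l)).
  by rewrite andbF mulr0 addr0.
by rewrite !mxE big_ord1 mxE !eqxx mulr1 mulrDl.
Qed.

Lemma mxdot_add_col n (j : 'I_n) (A X : 'M[Z]_n) v :
  mxdot A (X + v *m delta_mx 0 j) = mxdot A X + vdot (col j A) v.
Proof.
rewrite /mxdot /vdot -big_split; apply: eq_bigr => i _ /=.
under eq_bigr do rewrite !mxE big_ord1 !mxE mulrDr.
rewrite big_split /=; congr (_ + _).
by rewrite (bigD1 j) //= eqxx mulr1 big1 ?addr0 ?mxE // => k /negbTE ->; rewrite !mulr0.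
Qed.

Lemma mxdot_mulmx n (A X F : 'M[Z]_n) : mxdot A (X *m F) = mxdot (A *m F^T) X.
Proof.
have mxdot_tr (B Y : 'M[Z]_n) : mxdot B Y = \tr (B^T *m Y).
  rewrite /mxdot /mxtrace exchange_big; apply: eq_bigr => i _.
  by rewrite mxE; apply: eq_bigr => k _; rewrite mxE.
by rewrite !mxdot_tr trmx_mul trmxK mulmxA mxtrace_mulC mulmxA.
Qed.
End MatrixDot.

Section CharacterSum.
Variables (C : numFieldType) (Z : finComNzRingType) (e : Z -> C).
Hypothesis eD : forall x y, e (x + y) = e x * e y.
Hypothesis norm_e : forall x, `|e x| = 1.
Hypothesis e_eq1 : forall x, e x = 1 -> x = 0.

Local Notation q := #|Z|.

Definition mxann m n (A : 'M[Z]_(m, n)) := [set t : Z | t *: A == 0].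

Definition singular_sum n (A : 'M[Z]_n) : C :=
  \sum_(X : 'M[Z]_n) (\det X == 0)%:R * e (mxdot A X).

Lemma e0 : e 0 = 1.
Proof.
have e0_neq0 : e 0 != 0 by rewrite -normr_eq0 norm_e oner_eq0.
by apply: (mulfI e0_neq0); rewrite -eD addr0 mulr1.
Qed.

Lemma sum_e_shift (V : finType) (phi : V -> Z) (sh : V -> V) (c : Z) :
  injective sh -> (forall v, phi (sh v) = phi v + c) -> c != 0 ->
  \sum_v e (phi v) = 0.
Proof.
move=> sh_inj phi_sh c_neq0.
have : (1 - e c) * \sum_v e (phi v) = 0.
  rewrite mulrBl mul1r {1}(reindex_inj sh_inj) mulr_sumr -sumrB big1 // => v _.
  by rewrite phi_sh eD mulrC subrr.
apply: contra_eq; rewrite mulf_eq0 negb_or => ->; rewrite andbT subr_eq0.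
by apply: contra c_neq0 => /eqP/esym/e_eq1 ->.
Qed.

Lemma sum_e_mul z : \sum_(t : Z) e (t * z) = (z == 0)%:R * q%:R.
Proof.
have [->|z_neq0] := eqVneq z 0.
  by under eq_bigr do rewrite mulr0 e0; rewrite sumr_const mul1r.
rewrite mul0r (sum_e_shift (sh := +%R^~ 1) (c := z)) // => [|t]; first exact: addIr.
by rewrite mulrDl mul1r.
Qed.

Lemma sum_e_vdot n (b : 'cV[Z]_n) :
  \sum_(v : 'cV[Z]_n) e (vdot b v) = (b == 0)%:R * (q ^ n)%:R.
Proof.
have [->|b_neq0] := eqVneq b 0.
  by under eq_bigr do rewrite vdot0l e0; rewrite sumr_const card_mx muln1 mul1r.
have [i bi_neq0] : exists i, b i 0 != 0.
  apply/existsP; apply: contraR b_neq0 => /existsPn b0.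
  by apply/eqP/matrixP => i j; rewrite ord1 mxE; apply/eqP/negPn.
rewrite mul0r (sum_e_shift (sh := +%R^~ (delta_mx i 0)) (c := b i 0)) //.
  exact: addIr.
by move=> v; rewrite vdotDr vdot_delta.
Qed.

Lemma q_neq0 : (q%:R : C) != 0.
Proof. by rewrite pnatr_eq0 -lt0n ltnW // card_finNzRing_gt1. Qed.

Lemma sum_vdot_indicator n z (a c : 'cV[Z]_n) :
  \sum_(v : 'cV[Z]_n) (z + vdot v c == 0)%:R * e (vdot a v) =
  q%:R^-1 * (q ^ n)%:R * \sum_(t : Z) (a + t *: c == 0)%:R * e (t * z).
Proof.
have indicator y : (y == 0)%:R = q%:R^-1 * \sum_(t : Z) e (t * y).
  by rewrite sum_e_mul mulrCA mulVf ?q_neq0 ?mulr1.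
under eq_bigr do rewrite indicator -mulrA mulr_suml.
rewrite -mulr_sumr exchange_big -mulrA; congr (_ * _).
rewrite mulr_sumr; apply: eq_bigr => t _.
have eDt v :
    e (t * (z + vdot v c)) * e (vdot a v) = e (t * z) * e (vdot (a + t *: c) v).
  by rewrite -!eD vdotDl vdotZl [vdot v c]vdotC; congr e; ring.
under eq_bigr do rewrite eDt.
by rewrite -mulr_sumr sum_e_vdot; ring.
Qed.

Lemma singular_sum_shift n (j : 'I_n) (A : 'M[Z]_n) (v : 'cV[Z]_n) :
  singular_sum A = \sum_(X : 'M[Z]_n)
    (\det X + vdot v (cofactor_col j X) == 0)%:R * (e (mxdot A X) * e (vdot (col j A) v)).
Proof.
rewrite /singular_sum (reindex_inj (addIr (v *m delta_mx 0 j))) /=.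
by apply: eq_bigr => X _; rewrite det_add_col mxdot_add_col eD.
Qed.

Lemma singular_sum_cofactor n (j : 'I_n) (A : 'M[Z]_n) :
  singular_sum A = q%:R^-1 * \sum_(X : 'M[Z]_n) \sum_(t : Z)
    (col j A + t *: cofactor_col j X == 0)%:R * (e (mxdot A X) * e (t * \det X)).
Proof.
have qn_neq0 : ((q ^ n)%:R : C) != 0 by rewrite natrX expf_neq0 ?q_neq0.
apply: (mulfI qn_neq0).
have <- : \sum_(v : 'cV[Z]_n) singular_sum A = (q ^ n)%:R * singular_sum A.
  by rewrite sumr_const card_mx muln1 mulr_natl.
under eq_bigr => v _ do rewrite (singular_sum_shift j A v).
rewrite exchange_big mulrA [_ * q%:R^-1]mulrC mulr_sumr; apply: eq_bigr => X _.
under eq_bigr do rewrite mulrCA.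
rewrite -mulr_sumr sum_vdot_indicator mulrCA; congr (_ * _).
by rewrite mulr_sumr; apply: eq_bigr => t _; rewrite mulrCA.
Qed.

Lemma norm_singular_sum_le n (j : 'I_n) (A : 'M[Z]_n) :
  `|singular_sum A| <= q%:R^-1 * \sum_(X : 'M[Z]_n)
     (#|[set t : Z | col j A + t *: cofactor_col j X == 0]|%:R : C).
Proof.
rewrite (singular_sum_cofactor j) normrM ger0_norm ?invr_ge0 ?ler0n //.
rewrite ler_wpM2l ?invr_ge0 ?ler0n //.
apply: le_trans (ler_norm_sum _ _ _) _; apply: ler_sum => X _.
apply: le_trans (ler_norm_sum _ _ _) _.
rewrite -sumr_const [leRHS]big_mkcond /=; apply: ler_sum => t _.
by rewrite inE !normrM !norm_e !mulr1; case: (_ == 0); rewrite ?normr1 ?normr0.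
Qed.

Definition orth_other_cols n (j : 'I_n) (a : 'cV[Z]_n) (X : 'M[Z]_n) :=
  [forall k, (k != j) ==> (vdot a (col k X) == 0)].

Lemma vdot_cofactor_col n (j k : 'I_n) (X : 'M[Z]_n) :
  vdot (cofactor_col j X) (col k X) = \det X *+ (j == k).
Proof.
have /matrixP/(_ j k) := mul_adj_mx X; rewrite !mxE => <-.
by apply: eq_bigr => i _; rewrite !mxE.
Qed.

Lemma card_col_solutions_le n (j : 'I_n) (a : 'cV[Z]_n) (X : 'M[Z]_n) :
  (#|[set t : Z | (a + t *: cofactor_col j X == 0)%R]|
     <= orth_other_cols j a X * #|mxann a|)%N.
Proof.
set c := cofactor_col j X.
have [->|[t0]] := set_0Vmem [set t : Z | a + t *: c == 0]; first by rewrite cards0.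
rewrite inE addr_eq0 => /eqP a_t0.
have -> : orth_other_cols j a X.
  apply/forallP => k; apply/implyP => kj.
  by rewrite a_t0 -scaleNr vdotZl vdot_cofactor_col [j == k]eq_sym (negbTE kj) mulr0.
rewrite mul1n -(card_imset _ (addIr (- t0))).
apply/subset_leq_card/fintype.subsetP => u /imsetP [t]; rewrite !inE addr_eq0 a_t0.
move=> /eqP/oppr_inj t_t0 ->.
by rewrite scalerN scalerA mulrC -scalerA scalerBl t_t0 subrr scaler0 oppr0.
Qed.

Lemma card_orth_other_cols n (j : 'I_n) (a : 'cV[Z]_n) :
  (#|[set X : 'M[Z]_n | orth_other_cols j a X]|
     <= q ^ n * #|[set y : 'cV[Z]_n | (vdot a y == 0)%R]| ^ n.-1)%N.
Proof.
set K := [set y : 'cV[Z]_n | vdot a y == 0].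
pose F := fun k : 'I_n => [pred y : 'cV[Z]_n | (k == j) || (y \in K)].
pose cols (X : 'M[Z]_n) := [ffun k => col k X].
have cols_inj : injective cols.
  move=> X Y /ffunP XY; apply/matrixP => i k.
  by have /matrixP/(_ i 0) := XY k; rewrite !ffunE !mxE.
rewrite -(card_imset _ cols_inj).
apply: (leq_trans (subset_leq_card (_ : _ \subset family F))).
  apply/fintype.subsetP => f /imsetP [X]; rewrite inE => /forallP XK ->.
  by apply/familyP => k; rewrite inE ffunE /= inE -implyNb; apply: XK.
rewrite card_family foldrE big_image /= (bigD1 j) //= leq_mul //.
  by rewrite (leq_trans (max_card _)) // card_mx muln1.
rewrite (eq_bigr (fun=> #|K|)) => [|k /negbTE kj].
  by rewrite (eq_bigl (mem (predC1 j))) // prod_nat_const cardC1 card_ord.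
by apply: eq_card => y; rewrite unfold_in /= kj.
Qed.

Lemma card_vdot_kernel n (a : 'cV[Z]_n) :
  (#|[set y : 'cV[Z]_n | (vdot a y == 0)%R]| * q = q ^ n * #|mxann a|)%N.
Proof.
apply/eqP; rewrite -(eqr_nat C) !natrM; apply/eqP.
have card_indicator (T : finType) (P : pred T) :
    (#|[set x | P x]|%:R : C) = \sum_x (P x)%:R.
  by rewrite -sumr_const big_mkcond /=; apply: eq_bigr => x _; rewrite inE; case: (P x).
rewrite !card_indicator.
have indicator y : (vdot a y == 0)%:R = q%:R^-1 * \sum_(t : Z) e (vdot (t *: a) y).
  by under eq_bigr do rewrite vdotZl; rewrite sum_e_mul mulrCA mulVf ?q_neq0 ?mulr1.
under eq_bigr do rewrite indicator.
rewrite -mulr_sumr exchange_big /=.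
under eq_bigr do rewrite sum_e_vdot.
by rewrite -mulr_suml mulrC !mulrA mulfV ?q_neq0 // mul1r mulrC.
Qed.

Lemma singular_sum_col_bound n (j : 'I_n.+1) (A : 'M[Z]_n.+1) :
  `|singular_sum A| <= (q ^ (n.+1 * n) * #|mxann (col j A)| ^ n.+1)%:R.
Proof.
set a := col j A; set k := #|mxann a|.
have card_K : #|[set y : 'cV[Z]_n.+1 | (vdot a y == 0)%R]| = (q ^ n * k)%N.
  apply/eqP; rewrite -(eqn_pmul2r (ltnW (card_finNzRing_gt1 Z))).
  by rewrite card_vdot_kernel expnSr mulnAC.
have card_orth : (\sum_(X : 'M[Z]_n.+1) orth_other_cols j a X
                  = #|[set X : 'M[Z]_n.+1 | orth_other_cols j a X]|)%N.
  by rewrite -sum1_card [RHS]big_mkcond; apply: eq_bigr => X _; rewrite inE; case: ifP.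
have sols_le : (\sum_(X : 'M[Z]_n.+1)
    #|[set t : Z | (a + t *: cofactor_col j X == 0)%R]|
    <= q * (q ^ (n.+1 * n) * k ^ n.+1))%N.
  apply: leq_trans (@leq_sum _ _ predT _ _ (fun X _ => card_col_solutions_le j a X)) _.
  rewrite -big_distrl /= card_orth.
  apply: leq_trans (leq_mul (card_orth_other_cols j a) (leqnn k)) _.
  rewrite card_K /= expnMn -expnM mulSn !expnS expnD; apply: eq_leq; ring.
apply: le_trans (norm_singular_sum_le j A) _.
rewrite -natr_sum mulrC ler_pdivrMr ?ltr0n ?(ltnW (card_finNzRing_gt1 Z)) //.
by rewrite -natrM ler_nat mulnC.
Qed.

Lemma singular_sum_mulmx n (A F : 'M[Z]_n) :
  \det F = 1 -> singular_sum A = singular_sum (A *m F^T).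
Proof.
move=> detF; have mulF_can (X : 'M[Z]_n) : X *m F *m \adj F = X.
  by rewrite -mulmxA mul_mx_adj detF mulmx1.
rewrite /singular_sum (reindex_inj (can_inj (g := mulmx^~ (\adj F)) mulF_can)) /=.
by apply: eq_bigr => X _; rewrite det_mulmx detF mulr1 mxdot_mulmx.
Qed.

Hypothesis regular : forall x : Z, exists y, x * x * y = x.

Lemma singular_sum_bound n (A : 'M[Z]_n.+1) :
  `|singular_sum A| <= (q ^ (n.+1 * n) * #|mxann A| ^ n.+1)%:R.
Proof.
have [w [w0 annAw]] := regular_ann_col_comb regular A.
(* F has first row w^T and identity rows below, so col 0 (A *m F^T) = A *m w. *)
pose F : 'M[Z]_n.+1 := \matrix_(i, j) if i == 0 then w j 0 else (i == j)%:R.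
have detF : \det F = 1.
  rewrite -det_tr det_trig; last first.
    apply/forallP => i; apply/forallP => j; apply/implyP => lt_ij.
    rewrite !mxE -!val_eqE /= gtn_eqF ?(gtn_eqF lt_ij) //.
    exact: leq_ltn_trans (leq0n i) lt_ij.
  rewrite big_ord_recl !mxE eqxx w0 mul1r big1 // => i _.
  by rewrite !mxE eqxx.
rewrite (singular_sum_mulmx A detF).
apply: le_trans (singular_sum_col_bound 0 _) _.
rewrite ler_nat leq_mul2l leq_exp2r // orbC subset_leq_card //.
apply/fintype.subsetP => t; rewrite !inE => /eqP tAw; apply/eqP/annAw.
rewrite -[RHS]tAw; congr (_ *: _); apply/matrixP => i k.
by rewrite !mxE (ord1 k); apply: eq_bigr => l _; rewrite !mxE eqxx.
Qed.
End CharacterSum.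

Lemma intr_Zp_eq0 m (z : int) : ((z%:~R : 'Z_m.+2) == 0) = (m.+2 %| `|z|)%N.
Proof.
have natr_Zp_eq0 k : ((k%:R : 'Z_m.+2) == 0) = (m.+2 %| k)%N.
  by rewrite -val_eqE /= val_Zp_nat.
by case: z => k; rewrite ?NegzE ?mulrNz ?oppr_eq0 -pmulrn natr_Zp_eq0.
Qed.

Section ComplexExponential.
Variable R : realType.

Definition expi (d : nat) (z : int) : R[i] :=
  (cos (2 * pi * z%:~R / d%:R) +i* sin (2 * pi * z%:~R / d%:R))%C.

Lemma cos_sin_2pi_int (z : int) :
  cos (z%:~R * (pi *+ 2)) = 1 :> R /\ sin (z%:~R * (pi *+ 2)) = 0 :> R.
Proof.
have cos_sin_nat k : cos (k%:R * (pi *+ 2)) = 1 :> R /\ sin (k%:R * (pi *+ 2)) = 0 :> R.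
  rewrite mulr_natl -[_ *+ k]add0r.
  by rewrite (periodicn (@cosD2pi R)) (periodicn (@sinD2pi R)) cos0 sin0.
case: z => k; first exact: cos_sin_nat.
by rewrite NegzE mulrNz mulNr cosN sinN; have [-> ->] := cos_sin_nat k.+1; rewrite oppr0.
Qed.

Lemma expiD d z1 z2 : expi d (z1 + z2) = expi d z1 * expi d z2.
Proof.
rewrite /expi intrD mulrDr mulrDl cosD sinD; apply/eqP.
by rewrite eq_complex /= !eqxx /= addrC eqxx.
Qed.

Lemma expi_dvd d z : (0 < d)%N -> (d%:Z %| z)%Z -> expi d z = 1.
Proof.
move=> d_gt0 /dvdzP [k ->].
have d_neq0 : (d%:R : R) != 0 by rewrite pnatr_eq0 -lt0n.
rewrite /expi (_ : 2 * pi * _ / _ = k%:~R * (pi *+ 2)); last first.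
  by rewrite intrM mulr2n; field.
by have [-> ->] := cos_sin_2pi_int k.
Qed.

Lemma expi_congr d z z' : (0 < d)%N -> (d%:Z %| z - z')%Z -> expi d z = expi d z'.
Proof. by move=> d_gt0 /(expi_dvd d_gt0) e1; rewrite -[z](subrK z') expiD e1 mul1r. Qed.

Lemma norm_expi d z : `|expi d z| = 1.
Proof. by rewrite normc_def /= cos2Dsin2 sqrtr1. Qed.

Lemma expi_neq1 d (x : nat) : (0 < x < d)%N -> expi d x != 1.
Proof.
case/andP=> x_gt0 x_lt_d; apply/eqP => -[cos1 _].
set u : R := pi * x%:R / d%:R.
have d_gt0 : (0 : R) < d%:R by rewrite ltr0n (ltn_trans x_gt0).
have sin_u_gt0 : 0 < sin u.
  apply: sin_gt0_pi; rewrite divr_gt0 // ?mulr_gt0 ?pi_gt0 ?ltr0n //=.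
  by rewrite ltr_pdivrMr // ltr_pM2l ?pi_gt0 // ltr_nat.
have : cos (u + u) = 1 by rewrite -cos1 /u -pmulrn; congr cos; field; exact: lt0r_neq0.
rewrite cosD -!expr2 cos2sin2 => cos2u; have : sin u ^+ 2 = 0 by lra.
by move/eqP; rewrite sqrf_eq0 (gt_eqF sin_u_gt0).
Qed.
End ComplexExponential.

Lemma gcdLd_dvd d n (a : 'M[int]_n) : (gcdLd d a %| d)%N.
Proof.
by rewrite /gcdLd; elim/big_rec: _ => // i x _; apply: dvdn_trans; apply: dvdn_gcdr.
Qed.

Lemma gcdLd_gt0 d n (a : 'M[int]_n) : (0 < d)%N -> (0 < gcdLd d a)%N.
Proof.
by move=> d_gt0; rewrite lt0n; apply: contraTneq (gcdLd_dvd d a) => ->; rewrite dvd0n -lt0n.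
Qed.

Section ZpCharacter.
Variables (R : realType) (m : nat).
Local Notation d := m.+2.

Definition expZp (x : 'Z_d) : R[i] := expi R d (val x).

Lemma expi_Zp (z : int) : expi R d z = expZp z%:~R.
Proof.
apply: expi_congr => //; rewrite dvdzE -intr_Zp_eq0 mulrzBr.
by rewrite -[(Posz _)%:~R]pmulrn natr_Zp subrr.
Qed.

Lemma expZpD x y : expZp (x + y) = expZp x * expZp y.
Proof.
by rewrite -[x in LHS]natr_Zp -[y in LHS]natr_Zp -natrD pmulrn -expi_Zp PoszD expiD.
Qed.

Lemma norm_expZp x : `|expZp x| = 1.
Proof. exact: norm_expi. Qed.

Lemma expZp_eq1 x : expZp x = 1 -> x = 0.
Proof.
have [x0|x_gt0] := posnP (val x); first by move=> _; apply: val_inj.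
by move/eqP; rewrite (negbTE (expi_neq1 _ _)) // x_gt0 ltn_ord.
Qed.

Lemma lift_mxK n (X : 'M['Z_d]_n) : map_mx (fun z : int => z%:~R) (lift_mx X) = X.
Proof. by apply/matrixP => i j; rewrite !mxE -pmulrn natr_Zp. Qed.

Lemma detzero_Zp n (X : 'M['Z_d]_n) : detzero X = (\det X == 0).
Proof.
rewrite /detzero dvdzE /= -intr_Zp_eq0 -[in RHS](lift_mxK X).
by rewrite (det_map_mx (intr : {rmorphism int -> 'Z_d})).
Qed.

Lemma linform_Zp n (a : 'M[int]_n) (X : 'M['Z_d]_n) :
  (linform a (lift_mx X))%:~R = mxdot (map_mx (fun z : int => z%:~R : 'Z_d) a) X.
Proof.
rewrite /linform /mxdot mulrz_sumr; apply: eq_bigr => i _.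
rewrite mulrz_sumr; apply: eq_bigr => j _.
by rewrite intrM !mxE -pmulrn natr_Zp.
Qed.

Lemma Sd_abs_Zp n (a : 'M[int]_n) :
  (Sd_abs R d a)%:C%C = `|singular_sum expZp (map_mx (fun z : int => z%:~R : 'Z_d) a)|.
Proof.
have -> : singular_sum expZp (map_mx (fun z : int => z%:~R : 'Z_d) a) =
    (Sd_re R d a +i* Sd_im R d a)%C.
  rewrite /Sd_re /Sd_im big_mkcond [X in (_ +i* X)%C]big_mkcond /singular_sum /=.
  elim/big_rec3: _ => // X y1 y2 y3 _ ->.
  rewrite detzero_Zp; case: eqP => _; last by rewrite mul0r !add0r.
  by rewrite mul1r -linform_Zp -expi_Zp.
by rewrite normc_def.
Qed.

Lemma card_mxann_Zp n (a : 'M[int]_n) :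
  (#|mxann (map_mx (fun z : int => z%:~R : 'Z_d) a)| <= gcdLd d a)%N.
Proof.
set g := gcdLd d a; have g_dvd : (g %| d)%N := gcdLd_dvd d a.
have g_gt0 : (0 < g)%N by exact: gcdLd_gt0.
set h := (d %/ g)%N; have d_hg : d = (h * g)%N by rewrite divnK.
have h_gt0 : (0 < h)%N by rewrite divn_gt0 // dvdn_leq.
have ann_dvd t : t \in mxann (map_mx (fun z : int => z%:~R : 'Z_d) a) -> (h %| t)%N.
  rewrite inE => /eqP/matrixP annt; rewrite -(dvdn_pmul2r g_gt0) -d_hg /g /gcdLd.
  elim/big_rec: _ => [|i x _ dx]; first exact: dvdn_mull.
  rewrite muln_gcdr dvdn_gcd dx andbT.
  elim/big_rec: _ => [|j y _ dy]; first exact: dvdn_mull.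
  rewrite muln_gcdr dvdn_gcd dy andbT.
  have := annt i j; rewrite !mxE -[t in t * _]natr_Zp pmulrn -intrM => /eqP.
  by rewrite intr_Zp_eq0 abszM.
apply: leq_trans (_ : #|[set ((k * h)%N%:R : 'Z_d) | k : 'I_g]| <= g)%N.
  apply/subset_leq_card/fintype.subsetP => t /ann_dvd h_t; apply/imsetP.
  have t_lt : (t %/ h < g)%N by rewrite ltn_divLR // mulnC -d_hg ltn_ord.
  by exists (Ordinal t_lt) => //; apply: val_inj; rewrite /= val_Zp_nat ?divnK ?modn_small.
by apply: leq_trans (leq_imset_card _ _) _; rewrite card_ord.
Qed.
End ZpCharacter.

Lemma Sd_abs_modulus1 (R : realType) n (a : 'M[int]_n) : Sd_abs R 1 a = 1.
Proof.
have cos_sin z :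
    cos (2 * pi * z%:~R / 1%:R) = 1 :> R /\ sin (2 * pi * z%:~R / 1%:R) = 0 :> R.
  rewrite divr1 (_ : 2 * pi * _ = z%:~R * (pi *+ 2)); first exact: cos_sin_2pi_int.
  by rewrite mulr2n; ring.
have im0 : Sd_im R 1 a = 0.
  by rewrite /Sd_im big1 // => X _; case: (cos_sin (linform a (lift_mx X))).
have re1 : Sd_re R 1 a = 1.
  rewrite /Sd_re (eq_bigr (fun=> 1)) => [|X _]; last first.
    by case: (cos_sin (linform a (lift_mx X))).
  rewrite sumr_const (eq_card (B := predT)) => [|X]; last by rewrite !unfold_in /= modn1.
  by rewrite card_mx card_ord exp1n.
by rewrite /Sd_abs re1 im0 expr0n /= addr0 expr1n sqrtr1.
Qed.

Lemma Sd_abs_le (R : realType) d n (a : 'M[int]_n.+1) : (0 < d)%N -> squarefree d ->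
  Sd_abs R d a <= (d ^ (n.+1 * n) * gcdLd d a ^ n.+1)%:R.
Proof.
(* 'Z_1 is Z/2Z in MathComp, so the modulus 1 is treated by hand. *)
case: d => [|[|m]] // _ sqf_d.
  have -> : gcdLd 1 a = 1%N by apply/eqP; rewrite -dvdn1 gcdLd_dvd.
  by rewrite Sd_abs_modulus1 !exp1n.
rewrite -lecR rmorph_nat Sd_abs_Zp.
apply: le_trans (singular_sum_bound (expZpD R (m := m)) (@norm_expZp R m) (@expZp_eq1 R m)
                  (reduced_regular (Zp_reduced sqf_d)) _) _.
by rewrite card_ord ler_nat leq_mul2l leq_exp2r ?card_mxann_Zp ?orbT.
Qed.

Lemma natr_expn_le_powR (R : realType) (d D n : nat) (x : R) :
  (0 < D <= d)%N -> x <= n.+1%:R ->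
  ((d ^ (n.+1 * n) * D ^ n.+1)%N%:R : R) <=
    d%:R `^ (n.+1 ^ 2)%:R * (D%:R / d%:R) `^ x.
Proof.
case/andP=> D_gt0 D_le_d x_le.
have d_gt0 : (0 : R) < d%:R by rewrite ltr0n (leq_trans D_gt0).
have ratio01 : 0 < (D%:R / d%:R : R) <= 1.
  by rewrite divr_gt0 // ?ltr0n // (ler_pdivrMr _ _ d_gt0) mul1r ler_nat.
apply: le_trans (ler_wpM2l (powR_ge0 _ _) (ger_powR ratio01 x_le)).
rewrite !powR_mulrn ?(ltW d_gt0) ?(ltW (andP ratio01).1) // expr_div_n natrM !natrX.
rewrite (_ : n.+1 ^ 2 = n.+1 * n + n.+1)%N; last by rewrite -mulnSr mulnn.
by rewrite exprD -mulrA [d%:R ^+ n.+1 * _]mulrC divfK // expf_neq0 // lt0r_neq0.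
Qed.

Local Open Scope classical_set_scope.
Local Open Scope ring_scope.

Theorem lemma3p7 (R : realType) (n : nat) (hn : (1 <= n)%N) :
  exists eps : nat -> R,
    eps @ \oo --> (0 : R) /\
    forall (d : nat) (a : 'M[int]_n),
      (1 <= d)%N -> squarefree d ->
      Sd_abs R d a <=
        (d%:R) `^ ((n ^ 2)%:R + eps d) *
        ((gcdLd d a)%:R / d%:R) `^ (if is_monomial a then n%:R
                                   else (n%:R + 1) / 2).
Proof.
exists (fun=> 0); split=> [|d a d_gt0 sqf_d]; first exact: cvg_cst.
case: n hn a => // n _ a; rewrite addr0.
apply: le_trans (Sd_abs_le R a d_gt0 sqf_d) _; apply: natr_expn_le_powR.
  by rewrite gcdLd_gt0 //= dvdn_leq ?gcdLd_dvd.
have : (1 : R) <= n.+1%:R by rewrite ler1n.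
by case: ifP => _; lra.
Qed.
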